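(* Let $f:\mathbb H\to\mathbb C$ be polar-analytic on $\mathbb H$ and let $(r_1,\theta_1),(r_2,\theta_2)\in\mathbb H$. Then the line integral $$\int_\gamma f(r,\theta)\,e^{i\theta}\,(dr+ir\,d\theta)$$ has the same value for every regular curve $\gamma$ in $\mathbb H$ starting at $(r_1,\theta_1)$ and ending at $(r_2,\theta_2)$. In particular, this integral vanishes for every closed regular curve $\gamma$ in $\mathbb H$.
   Context: $\mathbb H:=\{(r,\theta): r>0,\ \theta\in\mathbb R\}$. A function $f:\mathbb H\to\mathbb C$ is called polar-analytic on $\mathbb H$ if for every $(r_0,\theta_0)\in\mathbb H$ the limit $$(D_{\rm pol}f)(r_0,\theta_0):=\lim_{(r,\theta)\to(r_0,\theta_0)}\frac{f(r,\theta)-f(r_0,\theta_0)}{re^{i\theta}-r_0e^{i\theta_0}}$$ exists (with $re^{i\theta}\neq r_0e^{i\theta_0}$), independently of how $(r,\theta)$ approaches $(r_0,\theta_0)$ within $\mathbb H$. A regular curve is a piecewise continuously differentiable curve $\gamma:[a,b]\to\mathbb H$, $t\mapsto(r(t),\theta(t))$, and the line integral means $\int_a^b f(r(t),\theta(t))e^{i\theta(t)}\big(r'(t)+ir(t)\theta'(t)\big)\,dt$. *)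

From Stdlib Require Import Reals Lra.
Open Scope R_scope.

Definition Cpx : Type := (R * R)%type.
Definition C0 : Cpx := (0, 0).
Definition Cadd (z w : Cpx) : Cpx := (fst z + fst w, snd z + snd w).
Definition Csub (z w : Cpx) : Cpx := (fst z - fst w, snd z - snd w).
Definition Cmul (z w : Cpx) : Cpx :=
  (fst z * fst w - snd z * snd w, fst z * snd w + snd z * fst w).
Definition Cnorm (z : Cpx) : R := sqrt (fst z ^ 2 + snd z ^ 2).
Definition Cinv (z : Cpx) : Cpx :=
  (fst z / (fst z ^ 2 + snd z ^ 2), - snd z / (fst z ^ 2 + snd z ^ 2)).
Definition Cdiv (z w : Cpx) : Cpx := Cmul z (Cinv w).

Definition Cexpi (th : R) : Cpx := (cos th, sin th).
Definition polar (r th : R) : Cpx := (r * cos th, r * sin th).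

Definition polar_analytic (f : R -> R -> Cpx) : Prop :=
  forall r0 th0 : R, 0 < r0 ->
  exists L : Cpx, forall eps : R, 0 < eps ->
  exists delta : R, 0 < delta /\
    forall r th : R, 0 < r ->
      polar r th <> polar r0 th0 ->
      sqrt ((r - r0) ^ 2 + (th - th0) ^ 2) < delta ->
      Cnorm (Csub (Cdiv (Csub (f r th) (f r0 th0))
                        (Csub (polar r th) (polar r0 th0))) L) < eps.

Definition C1_on (g dg : R -> R) (u v : R) : Prop :=
  (forall t, u <= t <= v -> forall eps, 0 < eps ->
     exists delta, 0 < delta /\
       forall s, u <= s <= v -> s <> t -> Rabs (s - t) < delta ->
         Rabs ((g s - g t) / (s - t) - dg t) < eps) /\
  (forall t, u <= t <= v -> forall eps, 0 < eps ->
     exists delta, 0 < delta /\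
       forall s, u <= s <= v -> Rabs (s - t) < delta ->
         Rabs (dg s - dg t) < eps).

Definition regular_curve (a b : R) (rc thc : R -> R) (n : nat) (p : nat -> R)
  (dr dth : nat -> R -> R) : Prop :=
  (1 <= n)%nat /\ p O = a /\ p n = b /\
  (forall i, (i < n)%nat -> p i < p (S i)) /\
  (forall t, a <= t <= b -> 0 < rc t) /\
  (forall i, (i < n)%nat ->
     C1_on rc (dr i) (p i) (p (S i)) /\ C1_on thc (dth i) (p i) (p (S i))).

Definition CRint (g : R -> Cpx) (u v : R) (z : Cpx) : Prop :=
  (exists pr : Riemann_integrable (fun t => fst (g t)) u v, RiemannInt pr = fst z) /\
  (exists pr : Riemann_integrable (fun t => snd (g t)) u v, RiemannInt pr = snd z).

Fixpoint Csum (n : nat) (z : nat -> Cpx) : Cpx :=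
  match n with
  | O => C0
  | S m => Cadd (Csum m z) (z m)
  end.

Definition integrand (f : R -> R -> Cpx) (rc thc : R -> R) (dr dth : nat -> R -> R)
  (i : nat) (t : R) : Cpx :=
  Cmul (f (rc t) (thc t)) (Cmul (Cexpi (thc t)) (dr i t, rc t * dth i t)).

Definition line_integral (f : R -> R -> Cpx) (rc thc : R -> R) (n : nat)
  (p : nat -> R) (dr dth : nat -> R -> R) (z : Cpx) : Prop :=
  exists zs : nat -> Cpx,
    (forall i, (i < n)%nat ->
       CRint (integrand f rc thc dr dth i) (p i) (p (S i)) (zs i)) /\
    z = Csum n zs.

(* The form f e^{i th} (dr + i r dth) is f dz for z = r e^{i th}.  Its integral over the
   boundary of every rectangle of the (convex) half-plane H vanishes, by Goursat's argument:
   this is true for the affine integrands c + L (z - z0), which have the explicit primitive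
   c z + L (z - z0)^2 / 2, and polar-analyticity makes f affine up to o(|dz|) near each point,
   which is small against the area of the nested quadrisected rectangles.  Hence the integral
   along (1, 0) -> (r, 0) -> (r, th) is a primitive F(r, th) of the form, and on each C^1 piece
   of a regular curve the fundamental theorem of calculus turns the integral into an increment
   of F; summing over the pieces, the line integral is F(end) - F(start). *)

From Coquelicot Require Import Coquelicot.
From Stdlib Require Import Reals Lra Lia Classical ClassicalEpsilon FunctionalExtensionality.
Open Scope R_scope.

Definition Cpart (b : bool) (z : Cpx) : R := if b then fst z else snd z.

Definition Cnorm1 (z : Cpx) : R := Rabs (fst z) + Rabs (snd z).

Lemma Cnorm1_ge0 z : 0 <= Cnorm1 z.
Proof. unfold Cnorm1; pose proof (Rabs_pos (fst z)); pose proof (Rabs_pos (snd z)); lra. Qed.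

Lemma Rabs_Cpart_le b z : Rabs (Cpart b z) <= Cnorm1 z.
Proof.
  unfold Cnorm1; pose proof (Rabs_pos (fst z)); pose proof (Rabs_pos (snd z)).
  destruct b; simpl; lra.
Qed.

Lemma Cnorm1_add z w : Cnorm1 (Cadd z w) <= Cnorm1 z + Cnorm1 w.
Proof.
  unfold Cnorm1, Cadd; simpl.
  pose proof (Rabs_triang (fst z) (fst w)); pose proof (Rabs_triang (snd z) (snd w)); lra.
Qed.

Lemma Cnorm1_mul z w : Cnorm1 (Cmul z w) <= Cnorm1 z * Cnorm1 w.
Proof.
  destruct z as [a1 a2], w as [b1 b2]; unfold Cnorm1, Cmul; simpl.
  pose proof (Rabs_triang (a1 * b1) (- (a2 * b2))).
  pose proof (Rabs_triang (a1 * b2) (a2 * b1)).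
  rewrite Rabs_Ropp, !Rabs_mult in *.
  pose proof (Rabs_pos a1); pose proof (Rabs_pos a2);
  pose proof (Rabs_pos b1); pose proof (Rabs_pos b2). unfold Rminus. nra.
Qed.

Lemma Cnorm1_le_Cnorm z : Cnorm1 z <= 2 * Cnorm z.
Proof.
  destruct z as [x y]; unfold Cnorm1, Cnorm; cbn [fst snd].
  rewrite <- (sqrt_pow2 (Rabs x)), <- (sqrt_pow2 (Rabs y)) by apply Rabs_pos.
  rewrite !pow2_abs.
  assert (sqrt (x ^ 2) <= sqrt (x ^ 2 + y ^ 2)) by (apply sqrt_le_1_alt; pose proof (pow2_ge_0 x); pose proof (pow2_ge_0 y); lra).
  assert (sqrt (y ^ 2) <= sqrt (x ^ 2 + y ^ 2)) by (apply sqrt_le_1_alt; pose proof (pow2_ge_0 x); pose proof (pow2_ge_0 y); lra). lra.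
Qed.

Lemma Cnorm_le_Cnorm1 z : Cnorm z <= Cnorm1 z.
Proof.
  destruct z as [x y]; unfold Cnorm1, Cnorm; cbn [fst snd].
  rewrite <- (sqrt_pow2 (Rabs x + Rabs y)) by (pose proof (Rabs_pos x); pose proof (Rabs_pos y); lra).
  apply sqrt_le_1_alt. rewrite <- (pow2_abs x), <- (pow2_abs y).
  pose proof (Rabs_pos x); pose proof (Rabs_pos y). nra.
Qed.

Lemma Cnorm1_Cexpi t : Cnorm1 (Cexpi t) <= 2.
Proof.
  unfold Cnorm1, Cexpi; simpl.
  pose proof (COS_bound t); pose proof (SIN_bound t).
  assert (Rabs (cos t) <= 1) by (apply Rabs_le; lra).
  assert (Rabs (sin t) <= 1) by (apply Rabs_le; lra). lra.
Qed.

Lemma Cdiv_mul z w : w <> C0 -> Cmul (Cdiv z w) w = z.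
Proof.
  destruct z as [a1 a2], w as [b1 b2]; unfold C0; intro Hw.
  assert (Hn : b1 * b1 + b2 * b2 <> 0).
  { intro H0. apply Hw. assert (b1 = 0) by nra. assert (b2 = 0) by nra. subst; auto. }
  unfold Cdiv, Cmul, Cinv; simpl. f_equal; field; exact Hn.
Qed.

Lemma Rabs_cos_sub_le a b : Rabs (cos a - cos b) <= Rabs (a - b).
Proof.
  destruct (MVT_gen cos b a (fun x => - sin x)) as [c [_ ->]].
  - intros x _. apply is_derive_Reals, derivable_pt_lim_cos.
  - intros x _. apply continuity_cos.
  - rewrite Rabs_mult, Rabs_Ropp. pose proof (SIN_bound c).
    assert (Rabs (sin c) <= 1) by (apply Rabs_le; lra).
    pose proof (Rabs_pos (a - b)). nra.
Qed.

Lemma Rabs_sin_sub_le a b : Rabs (sin a - sin b) <= Rabs (a - b).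
Proof.
  destruct (MVT_gen sin b a cos) as [c [_ ->]].
  - intros x _. apply is_derive_Reals, derivable_pt_lim_sin.
  - intros x _. apply continuity_sin.
  - rewrite Rabs_mult. pose proof (COS_bound c).
    assert (Rabs (cos c) <= 1) by (apply Rabs_le; lra).
    pose proof (Rabs_pos (a - b)). nra.
Qed.

Lemma Cnorm1_polar_sub r t r0 t0 : 0 <= r0 ->
  Cnorm1 (Csub (polar r t) (polar r0 t0)) <= 2 * Rabs (r - r0) + 2 * r0 * Rabs (t - t0).
Proof.
  intro Hr0. unfold Cnorm1, Csub, polar; simpl.
  replace (r * cos t - r0 * cos t0) with ((r - r0) * cos t + r0 * (cos t - cos t0)) by ring.
  replace (r * sin t - r0 * sin t0) with ((r - r0) * sin t + r0 * (sin t - sin t0)) by ring.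
  pose proof (Rabs_triang ((r - r0) * cos t) (r0 * (cos t - cos t0))).
  pose proof (Rabs_triang ((r - r0) * sin t) (r0 * (sin t - sin t0))).
  rewrite !Rabs_mult, (Rabs_pos_eq r0) in * by lra.
  pose proof (Rabs_cos_sub_le t t0); pose proof (Rabs_sin_sub_le t t0).
  pose proof (COS_bound t); pose proof (SIN_bound t).
  assert (Rabs (cos t) <= 1) by (apply Rabs_le; lra).
  assert (Rabs (sin t) <= 1) by (apply Rabs_le; lra).
  pose proof (Rabs_pos (r - r0)). nra.
Qed.

Lemma polar_inj_local r t r0 t0 : 0 < r -> 0 < r0 -> Rabs (t - t0) < 1 ->
  polar r t = polar r0 t0 -> r = r0 /\ t = t0.
Proof.
  intros Hr Hr0 Ht Heq. unfold polar in Heq. injection Heq as Ec Es.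
  assert (Er : r = r0).
  { pose proof (sin2_cos2 t); pose proof (sin2_cos2 t0). unfold Rsqr in *.
    assert (r * r = r0 * r0).
    { transitivity ((r * cos t) * (r * cos t) + (r * sin t) * (r * sin t)); [nra|].
      rewrite Ec, Es. nra. }
    nra. }
  subst r0. split; [reflexivity|].
  assert (Hs : sin (t - t0) = 0).
  { rewrite sin_minus. apply Rmult_eq_reg_l with (r * r); [|nra].
    replace (r * r * (sin t * cos t0 - cos t * sin t0))
      with (r * sin t * (r * cos t0) - r * cos t * (r * sin t0)) by ring.
    rewrite Ec, Es. ring. }
  pose proof PI2_1. apply Rabs_def2 in Ht.
  destruct (Rtotal_order (t - t0) 0) as [Hl|[He|Hg]]; [|lra|].
  - assert (0 < sin (- (t - t0))) by (apply sin_gt_0; lra). rewrite sin_neg in H0; lra.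
  - assert (0 < sin (t - t0)) by (apply sin_gt_0; lra). lra.
Qed.

Lemma continuity_2d_pt_slice_l F x y : continuity_2d_pt F x y -> continuity_pt (fun u => F u y) x.
Proof.
  intros HF eps Heps. destruct (HF (mkposreal eps Heps)) as [d Hd].
  exists d; split; [apply cond_pos|]. intros u [_ Hu].
  apply Hd; [exact Hu|]. rewrite Rminus_diag, Rabs_R0. apply cond_pos.
Qed.

Lemma continuity_2d_pt_slice_r F x y : continuity_2d_pt F x y -> continuity_pt (fun v => F x v) y.
Proof.
  intros HF eps Heps. destruct (HF (mkposreal eps Heps)) as [d Hd].
  exists d; split; [apply cond_pos|]. intros v [_ Hv].
  apply Hd; [|exact Hv]. rewrite Rminus_diag, Rabs_R0. apply cond_pos.
Qed.

Lemma continuity_2d_pt_curve F p q x y :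
  continuity_2d_pt F (p x) (q x) -> continuity_pt p x -> continuity_pt q x ->
  continuity_2d_pt (fun u _ => F (p u) (q u)) x y.
Proof.
  intros HF Hp Hq eps. destruct (HF eps) as [d Hd].
  destruct (Hp d (cond_pos d)) as [dp [Hdp Pp]]. destruct (Hq d (cond_pos d)) as [dq [Hdq Pq]].
  exists (mkposreal _ (Rmin_pos _ _ Hdp Hdq)); simpl. intros u v Hu _.
  pose proof (Rmin_l dp dq); pose proof (Rmin_r dp dq).
  destruct (Req_dec u x) as [->|Hne]; [rewrite Rminus_diag, Rabs_R0; apply cond_pos|].
  apply Hd; [apply Pp|apply Pq];
    (split; [split; [exact I|congruence]|simpl; unfold R_dist; lra]).
Qed.

Lemma continuity_2d_pt_of_pt u x y : continuity_pt u x -> continuity_2d_pt (fun s _ => u s) x y.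
Proof. intro Hu. exact (continuity_1d_2d_pt_comp u (fun s _ => s) x y Hu (continuity_2d_pt_id1 x y)). Qed.

Definition Ccontinuity_2d_pt (k : R -> R -> Cpx) (x y : R) : Prop :=
  forall b, continuity_2d_pt (fun u v => Cpart b (k u v)) x y.

Lemma Ccontinuity_2d_pt_pair F G x y : continuity_2d_pt F x y -> continuity_2d_pt G x y ->
  Ccontinuity_2d_pt (fun u v => (F u v, G u v)) x y.
Proof. intros HF HG [|]; assumption. Qed.

Lemma Ccontinuity_2d_pt_const c x y : Ccontinuity_2d_pt (fun _ _ => c) x y.
Proof. intro b; apply continuity_2d_pt_const. Qed.

Lemma Ccontinuity_2d_pt_add k l x y : Ccontinuity_2d_pt k x y -> Ccontinuity_2d_pt l x y ->
  Ccontinuity_2d_pt (fun u v => Cadd (k u v) (l u v)) x y.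
Proof.
  intros Hk Hl [|].
  - exact (continuity_2d_pt_plus _ _ _ _ (Hk true) (Hl true)).
  - exact (continuity_2d_pt_plus _ _ _ _ (Hk false) (Hl false)).
Qed.

Lemma Ccontinuity_2d_pt_sub k l x y : Ccontinuity_2d_pt k x y -> Ccontinuity_2d_pt l x y ->
  Ccontinuity_2d_pt (fun u v => Csub (k u v) (l u v)) x y.
Proof.
  intros Hk Hl [|].
  - exact (continuity_2d_pt_minus _ _ _ _ (Hk true) (Hl true)).
  - exact (continuity_2d_pt_minus _ _ _ _ (Hk false) (Hl false)).
Qed.

Lemma Ccontinuity_2d_pt_mul k l x y : Ccontinuity_2d_pt k x y -> Ccontinuity_2d_pt l x y ->
  Ccontinuity_2d_pt (fun u v => Cmul (k u v) (l u v)) x y.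
Proof.
  intros Hk Hl b. pose proof (Hk true); pose proof (Hk false); pose proof (Hl true); pose proof (Hl false).
  destruct b; simpl;
    [apply continuity_2d_pt_minus|apply continuity_2d_pt_plus]; apply continuity_2d_pt_mult; auto.
Qed.

Lemma Ccontinuity_2d_pt_Cexpi x y : Ccontinuity_2d_pt (fun _ v => Cexpi v) x y.
Proof.
  apply Ccontinuity_2d_pt_pair;
    apply (continuity_1d_2d_pt_comp _ (fun _ v => v)); try apply continuity_2d_pt_id2.
  - apply continuity_cos.
  - apply continuity_sin.
Qed.

Lemma Ccontinuity_2d_pt_polar x y : Ccontinuity_2d_pt polar x y.
Proof.
  pose proof (Ccontinuity_2d_pt_Cexpi x y) as He.
  apply Ccontinuity_2d_pt_pair; apply continuity_2d_pt_mult;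
    [apply continuity_2d_pt_id1|exact (He true)|apply continuity_2d_pt_id1|exact (He false)].
Qed.

Lemma Ccontinuity_2d_pt_curve k p q x y :
  Ccontinuity_2d_pt k (p x) (q x) -> continuity_pt p x -> continuity_pt q x ->
  Ccontinuity_2d_pt (fun u _ => k (p u) (q u)) x y.
Proof. intros Hk Hp Hq b. exact (continuity_2d_pt_curve _ p q x y (Hk b) Hp Hq). Qed.

Definition affine (c L z0 : Cpx) (r t : R) : Cpx := Cadd c (Cmul L (Csub (polar r t) z0)).

Definition polar_remainder (f : R -> R -> Cpx) (L : Cpx) (r0 t0 r t : R) : Cpx :=
  Csub (Csub (f r t) (f r0 t0)) (Cmul L (Csub (polar r t) (polar r0 t0))).

Lemma polar_remainder_decomp f L r0 t0 r t :
  f r t = Cadd (affine (f r0 t0) L (polar r0 t0) r t) (polar_remainder f L r0 t0 r t).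
Proof.
  unfold affine, polar_remainder, Cadd, Csub, Cmul; simpl.
  destruct (f r t); simpl; f_equal; ring.
Qed.

Lemma polar_analytic_remainder f r0 t0 : polar_analytic f -> 0 < r0 ->
  exists L, forall eps, 0 < eps -> exists d, 0 < d /\
    forall r t, Rabs (r - r0) < d -> Rabs (t - t0) < d ->
      Cnorm1 (polar_remainder f L r0 t0 r t) <= eps * Cnorm1 (Csub (polar r t) (polar r0 t0)).
Proof.
  intros hf Hr0. destruct (hf r0 t0 Hr0) as [L HL]. exists L. intros eps Heps.
  destruct (HL (eps / 2)) as [d1 [Hd1 Hlim]]; [lra|].
  set (d := Rmin (Rmin (d1 / 2) 1) r0).
  assert (Hd : 0 < d) by (repeat apply Rmin_pos; lra).
  assert (d <= d1 / 2 /\ d <= 1 /\ d <= r0) as [Hdd1 [Hd1' Hdr0]].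
  { unfold d. pose proof (Rmin_l (Rmin (d1 / 2) 1) r0); pose proof (Rmin_r (Rmin (d1 / 2) 1) r0).
    pose proof (Rmin_l (d1 / 2) 1); pose proof (Rmin_r (d1 / 2) 1). lra. }
  exists d; split; [exact Hd|]. intros r t Hr Ht.
  assert (Hrpos : 0 < r) by (apply Rabs_def2 in Hr; lra).
  set (dz := Csub (polar r t) (polar r0 t0)).
  destruct (classic (dz = C0)) as [Hz|Hz].
  - (* locally, polar is injective, so dz = 0 forces (r, t) = (r0, t0) *)
    destruct (polar_inj_local r t r0 t0 Hrpos Hr0 ltac:(lra)) as [-> ->].
    { unfold dz, Csub, C0 in Hz. injection Hz as E1 E2. unfold polar in *. f_equal; lra. }
    replace (polar_remainder f L r0 t0 r0 t0) with C0
      by (unfold polar_remainder, Csub, Cmul, C0; simpl; f_equal; ring).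
    replace (Cnorm1 C0) with 0 by (unfold Cnorm1, C0; simpl; rewrite Rabs_R0; ring).
    apply Rmult_le_pos; [lra|apply Cnorm1_ge0].
  - assert (Hne : polar r t <> polar r0 t0).
    { intro E. apply Hz. unfold dz, C0. rewrite E. unfold Csub. f_equal; ring. }
    assert (Hs : sqrt ((r - r0) ^ 2 + (t - t0) ^ 2) < d1).
    { change (Cnorm (r - r0, t - t0) < d1). eapply Rle_lt_trans; [apply Cnorm_le_Cnorm1|].
      unfold Cnorm1; simpl. lra. }
    specialize (Hlim r t Hrpos Hne Hs). fold dz in Hlim.
    set (q := Cdiv (Csub (f r t) (f r0 t0)) dz) in Hlim.
    replace (polar_remainder f L r0 t0 r t) with (Cmul (Csub q L) dz).
    + eapply Rle_trans; [apply Cnorm1_mul|]. apply Rmult_le_compat_r; [apply Cnorm1_ge0|].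
      pose proof (Cnorm1_le_Cnorm (Csub q L)). lra.
    + unfold polar_remainder. fold dz. rewrite <- (Cdiv_mul (Csub (f r t) (f r0 t0)) dz Hz).
      fold q. unfold Cmul, Csub; simpl; f_equal; ring.
Qed.

Lemma polar_analytic_continuous f r0 t0 : polar_analytic f -> 0 < r0 ->
  Ccontinuity_2d_pt f r0 t0.
Proof.
  intros hf Hr0 b eps.
  destruct (polar_analytic_remainder f r0 t0 hf Hr0) as [L HL].
  destruct (HL 1 Rlt_0_1) as [d [Hd Hrem]].
  set (K := (Cnorm1 L + 1) * (2 + 2 * r0)).
  assert (HK : 0 < K) by (unfold K; pose proof (Cnorm1_ge0 L); nra).
  assert (He : 0 < Rmin d (eps / K)) by (apply Rmin_pos; [lra|apply Rdiv_lt_0_compat; [apply cond_pos|lra]]).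
  exists (mkposreal _ He); simpl. intros r t Hr Ht.
  pose proof (Rmin_l d (eps / K)); pose proof (Rmin_r d (eps / K)).
  specialize (Hrem r t ltac:(lra) ltac:(lra)).
  set (dz := Csub (polar r t) (polar r0 t0)) in *.
  assert (Hdz : Cnorm1 dz < (2 + 2 * r0) * (eps / K)).
  { eapply Rle_lt_trans; [apply Cnorm1_polar_sub; lra|]. nra. }
  replace (Cpart b (f r t) - Cpart b (f r0 t0))
    with (Cpart b (Cadd (polar_remainder f L r0 t0 r t) (Cmul L dz)))
    by (destruct b; unfold polar_remainder, Cadd, Csub, Cmul; simpl; ring).
  eapply Rle_lt_trans; [apply Rabs_Cpart_le|].
  eapply Rle_lt_trans; [apply Cnorm1_add|].
  pose proof (Cnorm1_mul L dz). pose proof (Cnorm1_ge0 L). pose proof (Cnorm1_ge0 dz).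
  assert ((Cnorm1 L + 1) * ((2 + 2 * r0) * (eps / K)) = eps) by (unfold K; field; lra).
  nra.
Qed.

Lemma polar_remainder_continuous f L r0 t0 r t : polar_analytic f -> 0 < r ->
  Ccontinuity_2d_pt (polar_remainder f L r0 t0) r t.
Proof.
  intros hf Hr. apply (Ccontinuity_2d_pt_sub (fun u v => Csub (f u v) (f r0 t0))
    (fun u v => Cmul L (Csub (polar u v) (polar r0 t0)))).
  - apply (Ccontinuity_2d_pt_sub f (fun _ _ => f r0 t0));
      [apply polar_analytic_continuous; assumption|apply Ccontinuity_2d_pt_const].
  - apply (Ccontinuity_2d_pt_mul (fun _ _ => L)); [apply Ccontinuity_2d_pt_const|].
    apply (Ccontinuity_2d_pt_sub polar (fun _ _ => polar r0 t0));
      [apply Ccontinuity_2d_pt_polar|apply Ccontinuity_2d_pt_const].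
Qed.

Lemma RInt_sub_const_le (u : R -> R) a b c eta : ex_RInt u a b ->
  (forall s, Rmin a b <= s <= Rmax a b -> Rabs (u s - c) <= eta) ->
  Rabs (RInt u a b - c * (b - a)) <= Rabs (b - a) * eta.
Proof.
  intros Hu Hb.
  apply (norm_RInt_le_const_abs (V := R_NormedModule) (fun s => u s - c) a b); [exact Hb|].
  replace (RInt u a b - c * (b - a)) with (minus (RInt u a b) (scal (b - a) c))
    by (unfold minus, plus, opp, scal; simpl; unfold mult; simpl; ring).
  apply (is_RInt_minus (V := R_NormedModule));
    [apply (RInt_correct (V := R_CompleteNormedModule)), Hu|apply (is_RInt_const (V := R_NormedModule))].
Qed.

Lemma Rabs_sub_le_between a b s : Rmin a b <= s <= Rmax a b -> Rabs (s - a) <= Rabs (b - a).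
Proof.
  unfold Rmin, Rmax. destruct (Rle_dec a b); intro Hs; apply Rabs_le;
    [rewrite Rabs_pos_eq by lra|rewrite Rabs_left1 by lra]; lra.
Qed.

Definition rect_integral (h g : R -> R -> R) (x1 x2 y1 y2 : R) : R :=
  RInt (fun s => h s y1) x1 x2 + RInt (fun t => g x2 t) y1 y2
  - RInt (fun s => h s y2) x1 x2 - RInt (fun t => g x1 t) y1 y2.

Definition continuous_on_H (h g : R -> R -> R) : Prop :=
  forall r t, 0 < r -> continuity_2d_pt h r t /\ continuity_2d_pt g r t.

Section RectIntegral.
Variables h g : R -> R -> R.
Hypothesis Hhg : continuous_on_H h g.

Lemma ex_RInt_radial t a b : 0 < a -> 0 < b -> ex_RInt (fun s => h s t) a b.
Proof.
  intros Ha Hb. apply (@ex_RInt_continuous R_CompleteNormedModule). intros s Hs.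
  apply continuity_pt_filterlim, continuity_2d_pt_slice_l, Hhg.
  eapply Rlt_le_trans; [|apply Hs]. apply Rmin_case; assumption.
Qed.

Lemma ex_RInt_angular r c d : 0 < r -> ex_RInt (fun t => g r t) c d.
Proof.
  intro Hr. apply (@ex_RInt_continuous R_CompleteNormedModule). intros t _.
  apply continuity_pt_filterlim, continuity_2d_pt_slice_r, Hhg, Hr.
Qed.

Lemma rect_integral_split x1 xm x2 y1 ym y2 : 0 < x1 -> 0 < xm -> 0 < x2 ->
  rect_integral h g x1 x2 y1 y2 =
  rect_integral h g x1 xm y1 ym + rect_integral h g xm x2 y1 ym
  + rect_integral h g x1 xm ym y2 + rect_integral h g xm x2 ym y2.
Proof.
  intros H1 Hm H2. unfold rect_integral.
  rewrite <- (RInt_Chasles (V := R_CompleteNormedModule) (fun s => h s y1) x1 xm x2)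
    by (apply ex_RInt_radial; assumption).
  rewrite <- (RInt_Chasles (V := R_CompleteNormedModule) (fun s => h s y2) x1 xm x2)
    by (apply ex_RInt_radial; assumption).
  rewrite <- (RInt_Chasles (V := R_CompleteNormedModule) (fun t => g x2 t) y1 ym y2)
    by (apply ex_RInt_angular; assumption).
  rewrite <- (RInt_Chasles (V := R_CompleteNormedModule) (fun t => g x1 t) y1 ym y2)
    by (apply ex_RInt_angular; assumption).
  unfold plus, opp; simpl. ring.
Qed.

Lemma rect_integral_swap_r x1 x2 y1 y2 : 0 < x1 -> 0 < x2 ->
  rect_integral h g x2 x1 y1 y2 = - rect_integral h g x1 x2 y1 y2.
Proof.
  intros H1 H2. unfold rect_integral.
  rewrite <- (opp_RInt_swap (V := R_CompleteNormedModule) (fun s => h s y1) x1 x2)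
    by (apply ex_RInt_radial; assumption).
  rewrite <- (opp_RInt_swap (V := R_CompleteNormedModule) (fun s => h s y2) x1 x2)
    by (apply ex_RInt_radial; assumption).
  unfold plus, opp; simpl. ring.
Qed.

Lemma rect_integral_swap_th x1 x2 y1 y2 : 0 < x1 -> 0 < x2 ->
  rect_integral h g x1 x2 y2 y1 = - rect_integral h g x1 x2 y1 y2.
Proof.
  intros H1 H2. unfold rect_integral.
  rewrite <- (opp_RInt_swap (V := R_CompleteNormedModule) (fun t => g x1 t) y1 y2)
    by (apply ex_RInt_angular; assumption).
  rewrite <- (opp_RInt_swap (V := R_CompleteNormedModule) (fun t => g x2 t) y1 y2)
    by (apply ex_RInt_angular; assumption).
  unfold plus, opp; simpl. ring.
Qed.

Lemma rect_integral_bound x1 x2 y1 y2 M : 0 < x1 -> x1 <= x2 -> y1 <= y2 ->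
  (forall r t, x1 <= r <= x2 -> y1 <= t <= y2 -> Rabs (h r t) <= M /\ Rabs (g r t) <= M) ->
  Rabs (rect_integral h g x1 x2 y1 y2) <= 2 * M * (x2 - x1) + 2 * M * (y2 - y1).
Proof.
  intros Hx1 Hx Hy Hb.
  assert (K : forall (u : R -> R) a b, a <= b -> ex_RInt u a b ->
            (forall s, a <= s <= b -> Rabs (u s) <= M) -> Rabs (RInt u a b) <= M * (b - a)).
  { intros u a b Hab Hu Hbu. rewrite Rmult_comm.
    apply abs_RInt_le_const; assumption. }
  unfold rect_integral.
  pose proof (K (fun s => h s y1) x1 x2 Hx ltac:(apply ex_RInt_radial; lra)
     ltac:(intros; apply Hb; lra)).
  pose proof (K (fun s => h s y2) x1 x2 Hx ltac:(apply ex_RInt_radial; lra)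
     ltac:(intros; apply Hb; lra)).
  pose proof (K (fun t => g x2 t) y1 y2 Hy ltac:(apply ex_RInt_angular; lra)
     ltac:(intros; apply Hb; lra)).
  pose proof (K (fun t => g x1 t) y1 y2 Hy ltac:(apply ex_RInt_angular; lra)
     ltac:(intros; apply Hb; lra)).
  repeat match goal with H : Rabs _ <= _ |- _ => apply Rabs_le_between in H end.
  apply Rabs_le. lra.
Qed.

Lemma rect_integral_exact (Phi : R -> R -> R) x1 x2 y1 y2 : 0 < x1 -> 0 < x2 ->
  (forall r t, 0 < r -> is_derive (fun s => Phi s t) r (h r t)) ->
  (forall r t, 0 < r -> is_derive (fun s => Phi r s) t (g r t)) ->
  rect_integral h g x1 x2 y1 y2 = 0.
Proof.
  intros H1 H2 Dr Dt.
  assert (Hmin : forall s, Rmin x1 x2 <= s -> 0 < s)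
    by (intros s Hs; eapply Rlt_le_trans; [|apply Hs]; apply Rmin_case; assumption).
  assert (Er : forall t, RInt (fun s => h s t) x1 x2 = Phi x2 t - Phi x1 t).
  { intro t. erewrite is_RInt_unique.
    2:{ apply (is_RInt_derive (V := R_CompleteNormedModule) (fun s => Phi s t)).
        - intros s Hs. apply Dr, Hmin, Hs.
        - intros s Hs. apply continuity_pt_filterlim, continuity_2d_pt_slice_l, Hhg, Hmin, Hs. }
    unfold minus, plus, opp; simpl. ring. }
  assert (Et : forall r, 0 < r -> RInt (fun t => g r t) y1 y2 = Phi r y2 - Phi r y1).
  { intros r Hr. erewrite is_RInt_unique.
    2:{ apply (is_RInt_derive (V := R_CompleteNormedModule) (fun s => Phi r s)).
        - intros t _. apply Dt, Hr.
        - intros t _. apply continuity_pt_filterlim, continuity_2d_pt_slice_r, Hhg, Hr. }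
    unfold minus, plus, opp; simpl. ring. }
  unfold rect_integral. rewrite !Er, !Et by assumption. ring.
Qed.

End RectIntegral.

Lemma rect_integral_plus h1 g1 h2 g2 x1 x2 y1 y2 :
  continuous_on_H h1 g1 -> continuous_on_H h2 g2 -> 0 < x1 -> 0 < x2 ->
  rect_integral (fun r t => h1 r t + h2 r t) (fun r t => g1 r t + g2 r t) x1 x2 y1 y2
  = rect_integral h1 g1 x1 x2 y1 y2 + rect_integral h2 g2 x1 x2 y1 y2.
Proof.
  intros C1 C2 H1 H2. unfold rect_integral.
  rewrite !(RInt_plus (V := R_CompleteNormedModule)
              (fun s => h1 s _) (fun s => h2 s _) x1 x2)
    by (apply ex_RInt_radial with (g := g1) + apply ex_RInt_radial with (g := g2); assumption).
  rewrite !(RInt_plus (V := R_CompleteNormedModule)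
              (fun t => g1 _ t) (fun t => g2 _ t) y1 y2)
    by (apply ex_RInt_angular with (h := h1) + apply ex_RInt_angular with (h := h2); assumption).
  unfold plus, opp; simpl. ring.
Qed.

(* [form_r k dr + form_th k dth] is [k dz] for [z = r e^{i th}]. *)
Definition form_r (k : R -> R -> Cpx) (r t : R) : Cpx := Cmul (k r t) (Cexpi t).
Definition form_th (k : R -> R -> Cpx) (r t : R) : Cpx := Cmul (k r t) (Cmul (0, r) (Cexpi t)).

Lemma continuous_on_H_form k b : (forall r t, 0 < r -> Ccontinuity_2d_pt k r t) ->
  continuous_on_H (fun r t => Cpart b (form_r k r t)) (fun r t => Cpart b (form_th k r t)).
Proof.
  intros Hk r t Hr. split.
  - apply (Ccontinuity_2d_pt_mul k (fun _ v => Cexpi v)); [apply Hk, Hr|apply Ccontinuity_2d_pt_Cexpi].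
  - apply (Ccontinuity_2d_pt_mul k (fun u v => Cmul (0, u) (Cexpi v))); [apply Hk, Hr|].
    apply (Ccontinuity_2d_pt_mul (fun u _ => (0, u)) (fun _ v => Cexpi v));
      [|apply Ccontinuity_2d_pt_Cexpi].
    apply Ccontinuity_2d_pt_pair; [apply continuity_2d_pt_const|apply continuity_2d_pt_id1].
Qed.

Lemma rect_integral_form_add k1 k2 b x1 x2 y1 y2 :
  (forall r t, 0 < r -> Ccontinuity_2d_pt k1 r t) -> (forall r t, 0 < r -> Ccontinuity_2d_pt k2 r t) ->
  0 < x1 -> 0 < x2 ->
  let k r t := Cadd (k1 r t) (k2 r t) in
  rect_integral (fun r t => Cpart b (form_r k r t)) (fun r t => Cpart b (form_th k r t)) x1 x2 y1 y2
  = rect_integral (fun r t => Cpart b (form_r k1 r t)) (fun r t => Cpart b (form_th k1 r t)) x1 x2 y1 y2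
  + rect_integral (fun r t => Cpart b (form_r k2 r t)) (fun r t => Cpart b (form_th k2 r t)) x1 x2 y1 y2.
Proof.
  intros H1 H2 Hx1 Hx2 k.
  rewrite <- rect_integral_plus by (try apply continuous_on_H_form; assumption).
  f_equal; do 2 (apply functional_extensionality; intro);
    destruct b; unfold k, form_r, form_th, Cmul, Cadd; simpl; ring.
Qed.

Lemma rect_integral_form_bound k b x1 x2 y1 y2 M :
  (forall r t, 0 < r -> Ccontinuity_2d_pt k r t) -> 0 < x1 <= x2 -> y1 <= y2 ->
  (forall r t, x1 <= r <= x2 -> y1 <= t <= y2 -> Cnorm1 (k r t) <= M) ->
  Rabs (rect_integral (fun r t => Cpart b (form_r k r t)) (fun r t => Cpart b (form_th k r t))
          x1 x2 y1 y2) <= 4 * (1 + x2) * M * (x2 - x1 + (y2 - y1)).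
Proof.
  intros Hk Hx Hy HM.
  assert (HM0 : 0 <= M) by (eapply Rle_trans; [apply Cnorm1_ge0|apply (HM x1 y1)]; lra).
  eapply Rle_trans.
  { apply (rect_integral_bound _ _ (continuous_on_H_form k b Hk) x1 x2 y1 y2 (2 * (1 + x2) * M));
      try lra.
    intros r t Hr Ht. pose proof (HM r t Hr Ht). pose proof (Cnorm1_ge0 (k r t)).
    pose proof (Cnorm1_Cexpi t). pose proof (Cnorm1_ge0 (Cexpi t)).
    unfold form_r, form_th. split; eapply Rle_trans; try apply Rabs_Cpart_le;
      eapply Rle_trans; try apply Cnorm1_mul.
    - assert (Cnorm1 (k r t) * Cnorm1 (Cexpi t) <= M * 2) by (apply Rmult_le_compat; lra).
      assert (0 <= x2 * M) by (apply Rmult_le_pos; lra). lra.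
    - assert (Cnorm1 (0, r) = r) by (unfold Cnorm1; simpl; rewrite Rabs_R0, Rabs_pos_eq; lra).
      pose proof (Cnorm1_mul (0, r) (Cexpi t)). pose proof (Cnorm1_ge0 (Cmul (0, r) (Cexpi t))).
      assert (Cnorm1 (Cmul (0, r) (Cexpi t)) <= 2 * (1 + x2)) by nra.
      replace (2 * (1 + x2) * M) with (M * (2 * (1 + x2))) by ring.
      apply Rmult_le_compat; lra. }
  lra.
Qed.

Lemma Ccontinuity_2d_pt_affine c L z0 r t : Ccontinuity_2d_pt (affine c L z0) r t.
Proof.
  apply (Ccontinuity_2d_pt_add (fun _ _ => c)); [apply Ccontinuity_2d_pt_const|].
  apply (Ccontinuity_2d_pt_mul (fun _ _ => L)); [apply Ccontinuity_2d_pt_const|].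
  apply (Ccontinuity_2d_pt_sub polar (fun _ _ => z0));
    [apply Ccontinuity_2d_pt_polar|apply Ccontinuity_2d_pt_const].
Qed.

(* The primitive [c z + L (z - z0)^2 / 2] of [c + L (z - z0)]. *)
Definition affine_primitive (c L z0 : Cpx) (r t : R) : Cpx :=
  let w := Csub (polar r t) z0 in
  Cadd (Cmul c (polar r t)) (Cmul (Cmul L w) (fst w / 2, snd w / 2)).

Lemma rect_integral_affine b c L z0 x1 x2 y1 y2 : 0 < x1 -> 0 < x2 ->
  rect_integral (fun r t => Cpart b (form_r (affine c L z0) r t))
                (fun r t => Cpart b (form_th (affine c L z0) r t)) x1 x2 y1 y2 = 0.
Proof.
  intros H1 H2.
  apply (rect_integral_exact _ _ (continuous_on_H_form _ b
    (fun r t _ => Ccontinuity_2d_pt_affine c L z0 r t))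
    (fun r t => Cpart b (affine_primitive c L z0 r t))); try assumption;
  intros r t _; destruct b;
  unfold affine_primitive, form_r, form_th, affine, Cpart, Cadd, Cmul, Csub, polar, Cexpi; simpl;
  auto_derive; trivial; field.
Qed.

Lemma nested_intervals (lo hi : nat -> R) :
  (forall n, lo n <= lo (S n)) -> (forall n, hi (S n) <= hi n) -> (forall n, lo n <= hi n) ->
  exists X, forall n, lo n <= X <= hi n.
Proof.
  intros Hlo Hhi Hle.
  assert (Mono : forall k n, lo n <= lo (k + n)%nat /\ hi (k + n)%nat <= hi n).
  { induction k; intro n; [simpl; lra|]. destruct (IHk n).
    specialize (Hlo (k + n)%nat); specialize (Hhi (k + n)%nat). simpl; lra. }
  assert (Cross : forall n m, lo n <= hi m).
  { intros n m. destruct (Nat.le_ge_cases n m) as [Hnm|Hmn].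
    - destruct (Nat.le_exists_sub n m Hnm) as [k [-> _]].
      destruct (Mono k n). specialize (Hle (k + n)%nat). lra.
    - destruct (Nat.le_exists_sub m n Hmn) as [k [-> _]].
      destruct (Mono k m). specialize (Hle (k + m)%nat). lra. }
  destruct (completeness (fun x => exists n, x = lo n)) as [X [Hub Hlub]].
  - exists (hi 0%nat). intros x [n ->]. apply Cross.
  - exists (lo 0%nat), 0%nat. reflexivity.
  - exists X. intro n. split.
    + apply Hub. exists n. reflexivity.
    + apply Hlub. intros x [m ->]. apply Cross.
Qed.

Section Quadrisection.
Variable P : R -> R -> R -> R -> Prop.
Variables a b c d : R.
Hypothesis Hab : a < b.
Hypothesis Hcd : c < d.
Hypothesis P_merge : forall x1 x2 y1 y2, a <= x1 <= x2 -> x2 <= b -> c <= y1 <= y2 -> y2 <= d ->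
  let xm := (x1 + x2) / 2 in let ym := (y1 + y2) / 2 in
  P x1 xm y1 ym -> P xm x2 y1 ym -> P x1 xm ym y2 -> P xm x2 ym y2 -> P x1 x2 y1 y2.
(* Only rectangles similar to the initial one need to be handled locally. *)
Hypothesis P_local : forall X Y, a <= X <= b -> c <= Y <= d -> exists delta, 0 < delta /\
  forall x1 x2 y1 y2, a <= x1 <= X -> X <= x2 <= b -> c <= y1 <= Y -> Y <= y2 <= d ->
    (x2 - x1) * (d - c) = (y2 - y1) * (b - a) -> x2 - x1 < delta -> y2 - y1 < delta ->
    P x1 x2 y1 y2.

Let wd (n : nat) : R := (b - a) * (/ 2) ^ n.
Let ht (n : nat) : R := (d - c) * (/ 2) ^ n.
Let failing (n : nat) (p : R * R) : Prop :=
  a <= fst p /\ fst p + wd n <= b /\ c <= snd p /\ snd p + ht n <= d /\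
  ~ P (fst p) (fst p + wd n) (snd p) (snd p + ht n).

Lemma failing_quarter n p : failing n p -> exists q, failing (S n) q /\
  fst p <= fst q /\ fst q + wd (S n) <= fst p + wd n /\
  snd p <= snd q /\ snd q + ht (S n) <= snd p + ht n.
Proof.
  destruct p as [x y]. intros (Hx1 & Hx2 & Hy1 & Hy2 & HnP); simpl in *.
  assert (Ew : wd n = wd (S n) + wd (S n)) by (unfold wd; simpl; field).
  assert (Eh : ht n = ht (S n) + ht (S n)) by (unfold ht; simpl; field).
  assert (0 < wd (S n)) by (unfold wd; apply Rmult_lt_0_compat; [lra|apply pow_lt; lra]).
  assert (0 < ht (S n)) by (unfold ht; apply Rmult_lt_0_compat; [lra|apply pow_lt; lra]).
  set (w := wd (S n)) in *. set (h := ht (S n)) in *.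
  assert (Hq : forall q, (fst q = x \/ fst q = x + w) -> (snd q = y \/ snd q = y + h) ->
                 ~ P (fst q) (fst q + w) (snd q) (snd q + h) -> exists q, failing (S n) q /\
                 x <= fst q /\ fst q + w <= x + wd n /\ y <= snd q /\ snd q + h <= y + ht n).
  { intros q Hqx Hqy HPq. exists q. unfold failing. fold w h. repeat split; try lra. exact HPq. }
  apply NNPP. intro Hnone. apply HnP. rewrite Ew, Eh.
  replace (x + (w + w)) with (x + w + w) by ring. replace (y + (h + h)) with (y + h + h) by ring.
  apply P_merge; try lra; cbv zeta;
    replace ((x + (x + w + w)) / 2) with (x + w) by field;
    replace ((y + (y + h + h)) / 2) with (y + h) by field;
    apply NNPP; intro HnPq.
  - apply Hnone, (Hq (x, y)); simpl; auto.
  - apply Hnone, (Hq (x + w, y)); simpl; auto.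
  - apply Hnone, (Hq (x, y + h)); simpl; auto.
  - apply Hnone, (Hq (x + w, y + h)); simpl; auto.
Qed.

Let quarter (n : nat) (p : R * R) : R * R :=
  epsilon (inhabits p) (fun q => failing (S n) q /\
    fst p <= fst q /\ fst q + wd (S n) <= fst p + wd n /\
    snd p <= snd q /\ snd q + ht (S n) <= snd p + ht n).

Let corner : nat -> R * R := nat_rect _ (a, c) quarter.

Lemma small_width delta : 0 < delta -> exists n, wd n < delta /\ ht n < delta.
Proof.
  intro Hd. assert (Hhalf : Rabs (/ 2) < 1) by (rewrite Rabs_pos_eq; lra).
  destruct (pow_lt_1_zero (/ 2) Hhalf (delta / (b - a + (d - c))))
    as [N HN]; [apply Rdiv_lt_0_compat; lra|].
  exists N. specialize (HN N (le_n N)). rewrite Rabs_pos_eq in HN by (apply pow_le; lra).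
  assert (Hq : (b - a + (d - c)) * (/ 2) ^ N < delta).
  { apply Rmult_lt_reg_r with (/ (b - a + (d - c))); [apply Rinv_0_lt_compat; lra|].
    replace ((b - a + (d - c)) * (/ 2) ^ N * / (b - a + (d - c))) with ((/ 2) ^ N) by (field; lra).
    exact HN. }
  assert (0 < (/ 2) ^ N) by (apply pow_lt; lra).
  unfold wd, ht. split; nra.
Qed.

Lemma quadrisection : P a b c d.
Proof.
  apply NNPP. intro HnP.
  assert (Hstep : forall n, failing n (corner n) -> failing (S n) (corner (S n)) /\
    fst (corner n) <= fst (corner (S n)) /\ fst (corner (S n)) + wd (S n) <= fst (corner n) + wd n /\
    snd (corner n) <= snd (corner (S n)) /\ snd (corner (S n)) + ht (S n) <= snd (corner n) + ht n).
  { intros n Hn. change (corner (S n)) with (quarter n (corner n)).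
    apply (epsilon_spec (inhabits (corner n))), failing_quarter, Hn. }
  assert (Hfail : forall n, failing n (corner n)).
  { induction n as [|n IH]; [|apply Hstep, IH].
    unfold failing, wd, ht; simpl. rewrite !Rmult_1_r. repeat split; try lra.
    replace (a + (b - a)) with b by ring. replace (c + (d - c)) with d by ring. exact HnP. }
  destruct (nested_intervals (fun n => fst (corner n)) (fun n => fst (corner n) + wd n)) as [X HX];
    try (intro n; destruct (Hstep n (Hfail n)) as (_ & ?); lra).
  { intro n. assert (0 < wd n) by (unfold wd; apply Rmult_lt_0_compat; [lra|apply pow_lt; lra]). lra. }
  destruct (nested_intervals (fun n => snd (corner n)) (fun n => snd (corner n) + ht n)) as [Y HY];
    try (intro n; destruct (Hstep n (Hfail n)) as (_ & ?); lra).
  { intro n. assert (0 < ht n) by (unfold ht; apply Rmult_lt_0_compat; [lra|apply pow_lt; lra]). lra. }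
  assert (HXY : a <= X <= b /\ c <= Y <= d).
  { destruct (Hfail 0%nat) as (? & ? & ? & ? & _). specialize (HX 0%nat). specialize (HY 0%nat).
    simpl in *. lra. }
  destruct HXY as [HXab HYcd].
  destruct (P_local X Y HXab HYcd) as [delta [Hdelta Hloc]].
  destruct (small_width delta Hdelta) as [n [Hwn Hhn]].
  destruct (Hfail n) as (H1 & H2 & H3 & H4 & HnPn). apply HnPn.
  specialize (HX n). specialize (HY n). simpl in HX, HY.
  apply Hloc; try lra. unfold wd, ht. ring.
Qed.
End Quadrisection.

Lemma Rabs_le_all_eps_eq_0 x : (forall eps, 0 < eps -> Rabs x <= eps) -> x = 0.
Proof.
  intro Hx. destruct (Req_dec x 0) as [|Hne]; [assumption|].
  pose proof (Rabs_pos_lt x Hne). specialize (Hx (Rabs x / 2) ltac:(lra)). lra.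
Qed.

Section PolarAnalyticForm.
Variable f : R -> R -> Cpx.
Hypothesis hf : polar_analytic f.
Variable b : bool.

Let h (r t : R) : R := Cpart b (form_r f r t).
Let g (r t : R) : R := Cpart b (form_th f r t).

Lemma continuous_on_H_polar_analytic : continuous_on_H h g.
Proof. apply continuous_on_H_form. intros r t Hr. apply polar_analytic_continuous; assumption. Qed.

(* Goursat's estimate: near (X, Y), f is affine up to [o(|dz|)], and affine integrands have
   zero boundary integrals. *)
Lemma rect_integral_local X Y eps : 0 < X -> 0 < eps -> exists delta, 0 < delta /\
  forall x1 x2 y1 y2, 0 < x1 <= X -> X <= x2 -> y1 <= Y <= y2 -> x2 - x1 < delta -> y2 - y1 < delta ->
  Rabs (rect_integral h g x1 x2 y1 y2) <= eps * (x2 - x1 + (y2 - y1)) ^ 2.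
Proof.
  intros HX Heps.
  destruct (polar_analytic_remainder f X Y hf HX) as [L HL].
  set (e := eps / (8 * (1 + X) * (2 + X))).
  assert (He : 0 < e) by (unfold e; apply Rdiv_lt_0_compat; [lra|]; nra).
  destruct (HL e He) as [d [Hd Hrem]].
  exists (Rmin d 1). split; [apply Rmin_pos; lra|].
  intros x1 x2 y1 y2 Hx1 Hx2 Hy Hw Hh.
  pose proof (Rmin_l d 1); pose proof (Rmin_r d 1).
  set (s := x2 - x1 + (y2 - y1)).
  assert (HE : forall r t, x1 <= r <= x2 -> y1 <= t <= y2 ->
                 Cnorm1 (polar_remainder f L X Y r t) <= 2 * e * (1 + X) * s).
  { intros r t Hr Ht. eapply Rle_trans; [apply Hrem; apply Rabs_def1; lra|].
    eapply Rle_trans; [apply Rmult_le_compat_l; [lra|apply Cnorm1_polar_sub; lra]|].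
    assert (Rabs (r - X) <= x2 - x1) by (apply Rabs_le; lra).
    assert (X * Rabs (t - Y) <= X * (y2 - y1)) by (apply Rmult_le_compat_l; [|apply Rabs_le]; lra).
    assert (0 <= X * (x2 - x1)) by (apply Rmult_le_pos; lra).
    replace (2 * e * (1 + X) * s) with (e * (2 * (1 + X) * s)) by ring.
    apply Rmult_le_compat_l; unfold s; lra. }
  unfold h, g. rewrite (functional_extensionality_dep f _
    (fun r => functional_extensionality _ _ (polar_remainder_decomp f L X Y r))).
  rewrite rect_integral_form_add, rect_integral_affine, Rplus_0_l by
    (try (intros; apply Ccontinuity_2d_pt_affine); try (intros; apply polar_remainder_continuous);
     assumption || lra).
  eapply Rle_trans; [apply rect_integral_form_bound with (M := 2 * e * (1 + X) * s); try lra|].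
  - intros; apply polar_remainder_continuous; assumption.
  - exact HE.
  - fold s. assert (0 <= s) by (unfold s; lra).
    replace (eps * s ^ 2) with (8 * (2 + X) * (e * (1 + X) * s * s)) by (unfold e; field; lra).
    replace (4 * (1 + x2) * (2 * e * (1 + X) * s) * s)
      with (8 * (1 + x2) * (e * (1 + X) * s * s)) by ring.
    apply Rmult_le_compat_r; [|lra].
    apply Rmult_le_pos; [apply Rmult_le_pos; [apply Rmult_le_pos|]|]; lra.
Qed.

Lemma rect_integral_polar_analytic_ordered x1 x2 y1 y2 : 0 < x1 < x2 -> y1 < y2 ->
  rect_integral h g x1 x2 y1 y2 = 0.
Proof.
  intros Hx Hy. apply Rabs_le_all_eps_eq_0. intros eps Heps.
  set (W := x2 - x1). set (H := y2 - y1).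
  assert (HW : 0 < W) by (unfold W; lra). assert (HH : 0 < H) by (unfold H; lra).
  set (k := eps / (W * H)).
  assert (Hk : 0 < k) by (unfold k; apply Rdiv_lt_0_compat; nra).
  replace eps with (k * (x2 - x1) * (y2 - y1)) by (unfold k, W, H; field; lra).
  apply (quadrisection (fun a b c d => Rabs (rect_integral h g a b c d) <= k * (b - a) * (d - c)));
    try lra.
  - intros a b' c d' Ha Hb Hc Hd xm ym I1 I2 I3 I4.
    rewrite (rect_integral_split h g continuous_on_H_polar_analytic a xm b' c ym d')
      by (unfold xm; lra).
    pose proof (Rabs_triang (rect_integral h g a xm c ym + rect_integral h g xm b' c ym
      + rect_integral h g a xm ym d') (rect_integral h g xm b' ym d')).
    pose proof (Rabs_triang (rect_integral h g a xm c ym + rect_integral h g xm b' c ym)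
      (rect_integral h g a xm ym d')).
    pose proof (Rabs_triang (rect_integral h g a xm c ym) (rect_integral h g xm b' c ym)).
    assert (k * (xm - a) * (ym - c) + k * (b' - xm) * (ym - c) + k * (xm - a) * (d' - ym)
      + k * (b' - xm) * (d' - ym) = k * (b' - a) * (d' - c)) by (unfold xm, ym; field).
    lra.
  - intros X Y HX HY.
    destruct (rect_integral_local X Y (k * (W * H) / (W + H) ^ 2)) as [delta [Hdelta Hloc]];
      [lra|apply Rdiv_lt_0_compat; [apply Rmult_lt_0_compat; nra|apply pow_lt; lra]|].
    exists delta. split; [exact Hdelta|]. intros a b' c d' Ha Hb Hc Hd Hsim Hwd Hhd.
    eapply Rle_trans; [apply Hloc; lra|]. apply Req_le.
    fold W H in Hsim.
    assert (Key : (b' - a + (d' - c)) ^ 2 * (W * H) = (b' - a) * (d' - c) * (W + H) ^ 2).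
    { apply Rminus_diag_uniq.
      replace ((b' - a + (d' - c)) ^ 2 * (W * H) - (b' - a) * (d' - c) * (W + H) ^ 2)
        with (((b' - a) * H - (d' - c) * W) * ((b' - a) * W - (d' - c) * H)) by ring.
      rewrite Hsim. ring. }
    replace (k * (W * H) / (W + H) ^ 2 * (b' - a + (d' - c)) ^ 2)
      with (k * ((b' - a + (d' - c)) ^ 2 * (W * H)) / (W + H) ^ 2) by (field; lra).
    rewrite Key. field. lra.
Qed.

Lemma rect_integral_polar_analytic x1 x2 y1 y2 : 0 < x1 -> 0 < x2 ->
  rect_integral h g x1 x2 y1 y2 = 0.
Proof.
  intros H1 H2.
  assert (Hdeg_x : forall x y1 y2, rect_integral h g x x y1 y2 = 0)
    by (intros; unfold rect_integral; rewrite !RInt_point; unfold zero; simpl; ring).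
  assert (Hdeg_y : forall x1 x2 y, rect_integral h g x1 x2 y y = 0)
    by (intros; unfold rect_integral; rewrite !(RInt_point y); unfold zero; simpl; ring).
  assert (Hx : forall y1 y2, y1 < y2 -> rect_integral h g x1 x2 y1 y2 = 0).
  { intros y1' y2' Hy. destruct (Rtotal_order x1 x2) as [Hlt|[->|Hgt]].
    - apply rect_integral_polar_analytic_ordered; lra.
    - apply Hdeg_x.
    - rewrite <- Ropp_0, <- (rect_integral_polar_analytic_ordered x2 x1 y1' y2') by lra.
      apply rect_integral_swap_r; [exact continuous_on_H_polar_analytic|lra|lra]. }
  destruct (Rtotal_order y1 y2) as [Hlt|[->|Hgt]]; [apply Hx, Hlt|apply Hdeg_y|].
  rewrite rect_integral_swap_th, Hx by (try exact continuous_on_H_polar_analytic; lra). ring.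
Qed.


Definition primitive (r t : R) : R := RInt (fun s => h s 0) 1 r + RInt (fun y => g r y) 0 t.

Lemma primitive_sub r0 t0 r t : 0 < r0 -> 0 < r ->
  primitive r t - primitive r0 t0 = RInt (fun y => g r0 y) t0 t + RInt (fun s => h s t) r0 r.
Proof.
  intros H0 H1. pose proof (rect_integral_polar_analytic r0 r 0 t H0 H1) as Hrect.
  pose proof continuous_on_H_polar_analytic as Hc.
  unfold rect_integral in Hrect. unfold primitive.
  rewrite <- (RInt_Chasles (V := R_CompleteNormedModule) (fun s => h s 0) 1 r0 r)
    by (apply (ex_RInt_radial h g Hc); lra).
  rewrite <- (RInt_Chasles (V := R_CompleteNormedModule) (fun y => g r0 y) 0 t0 t) in Hrect
    by (apply (ex_RInt_angular h g Hc); lra).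
  unfold plus in *; simpl in *. lra.
Qed.

Lemma primitive_differentiable r0 t0 : 0 < r0 ->
  differentiable_pt_lim primitive r0 t0 (h r0 t0) (g r0 t0).
Proof.
  intros H0 eps.
  destruct (continuous_on_H_polar_analytic r0 t0 H0) as [Ch Cg].
  destruct (Ch (pos_div_2 eps)) as [d1 Hd1]. destruct (Cg (pos_div_2 eps)) as [d2 Hd2].
  assert (Hd : 0 < Rmin (Rmin d1 d2) (r0 / 2))
    by (repeat apply Rmin_pos; try apply cond_pos; lra).
  exists (mkposreal _ Hd). simpl. intros u v Hu Hv.
  pose proof (Rmin_l (Rmin d1 d2) (r0 / 2)); pose proof (Rmin_r (Rmin d1 d2) (r0 / 2)).
  pose proof (Rmin_l d1 d2); pose proof (Rmin_r d1 d2).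
  assert (Hu0 : 0 < u) by (apply Rabs_def2 in Hu; lra).
  rewrite primitive_sub by assumption.
  assert (Q1 : Rabs (RInt (fun y => g r0 y) t0 v - g r0 t0 * (v - t0)) <= Rabs (v - t0) * (eps / 2)).
  { apply RInt_sub_const_le; [apply (ex_RInt_angular h g continuous_on_H_polar_analytic); lra|].
    intros y Hy. left. apply Hd2; [rewrite Rminus_diag, Rabs_R0; apply cond_pos|].
    pose proof (Rabs_sub_le_between t0 v y Hy). lra. }
  assert (Q2 : Rabs (RInt (fun s => h s v) r0 u - h r0 t0 * (u - r0)) <= Rabs (u - r0) * (eps / 2)).
  { apply RInt_sub_const_le; [apply (ex_RInt_radial h g continuous_on_H_polar_analytic); lra|].
    intros s Hs. left. apply Hd1; [|lra].
    pose proof (Rabs_sub_le_between r0 u s Hs). lra. }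
  pose proof (Rabs_triang (RInt (fun y => g r0 y) t0 v - g r0 t0 * (v - t0))
                          (RInt (fun s => h s v) r0 u - h r0 t0 * (u - r0))).
  pose proof (Rmax_l (Rabs (u - r0)) (Rabs (v - t0))). pose proof (Rmax_r (Rabs (u - r0)) (Rabs (v - t0))).
  destruct eps as [e He]; simpl in *.
  replace (RInt (fun y => g r0 y) t0 v + RInt (fun s => h s v) r0 u
           - (h r0 t0 * (u - r0) + g r0 t0 * (v - t0)))
    with ((RInt (fun y => g r0 y) t0 v - g r0 t0 * (v - t0))
          + (RInt (fun s => h s v) r0 u - h r0 t0 * (u - r0))) by ring.
  nra.
Qed.

End PolarAnalyticForm.

Lemma RInt_eq_sub_of_derive (G dG : R -> R) u v : u < v ->
  (forall x, u < x < v -> derivable_pt_lim G x (dG x)) ->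
  (forall x, u <= x <= v -> continuity_pt G x) ->
  (forall x, continuity_pt dG x) ->
  RInt dG u v = G v - G u.
Proof.
  intros Huv HD HC Hd.
  assert (HI : forall x, is_derive (fun y => RInt dG u y) x (dG x)).
  { intro x. apply (is_derive_RInt (V := R_NormedModule) dG (fun y => RInt dG u y) u x); [|apply continuity_pt_filterlim, Hd].
    apply filter_forall. intro y. apply (RInt_correct (V := R_CompleteNormedModule) dG u y).
    apply (ex_RInt_continuous (V := R_CompleteNormedModule)).
    intros z _. apply continuity_pt_filterlim, Hd. }
  destruct (MVT_gen (fun x => G x - RInt dG u x) u v (fun _ => 0)) as [c [_ Hc]].
  - intros x Hx. rewrite Rmin_left, Rmax_right in Hx by lra.
    pose proof (is_derive_minus (K := R_AbsRing) (V := R_NormedModule) _ _ x _ _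
      (proj2 (is_derive_Reals _ _ _) (HD x Hx)) (HI x)) as D.
    rewrite minus_eq_zero in D. exact D.
  - intros x Hx. rewrite Rmin_left, Rmax_right in Hx by lra. apply continuity_pt_minus.
    + apply HC, Hx.
    + apply continuity_pt_filterlim, (ex_derive_continuous (K := R_AbsRing) (V := R_NormedModule)).
      eexists. apply HI.
  - rewrite RInt_point in Hc. unfold zero in Hc; simpl in Hc. lra.
Qed.

Definition clamp (u v t : R) : R := Rmax u (Rmin t v).

Lemma clamp_in u v t : u <= v -> u <= clamp u v t <= v.
Proof. intro H. unfold clamp, Rmax, Rmin. repeat destruct Rle_dec; lra. Qed.

Lemma clamp_id u v t : u <= t <= v -> clamp u v t = t.
Proof. intro H. unfold clamp, Rmax, Rmin. repeat destruct Rle_dec; lra. Qed.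

Lemma clamp_lipschitz u v s t : u <= v -> Rabs (clamp u v s - clamp u v t) <= Rabs (s - t).
Proof.
  intro H. unfold clamp, Rmax, Rmin. repeat destruct Rle_dec; unfold Rabs;
    repeat destruct Rcase_abs; lra.
Qed.

Section ClampedC1.
Variables (g dg : R -> R) (u v : R).
Hypothesis Huv : u < v.
Hypothesis Hg : C1_on g dg u v.

(* [g] and [dg] are only continuous within [u, v]; clamping extends them continuously to R. *)
Lemma continuity_pt_clamp (k : R -> R) t :
  (forall s, u <= s <= v -> forall eps, 0 < eps -> exists delta, 0 < delta /\
     forall s', u <= s' <= v -> Rabs (s' - s) < delta -> Rabs (k s' - k s) < eps) ->
  continuity_pt (fun x => k (clamp u v x)) t.
Proof.
  intros Hk eps Heps.
  destruct (Hk (clamp u v t) (clamp_in u v t ltac:(lra)) eps Heps) as [d [Hd P]].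
  exists d. split; [exact Hd|]. intros y [_ Hy]. simpl in *. unfold R_dist in *.
  apply P; [apply clamp_in; lra|].
  eapply Rle_lt_trans; [apply clamp_lipschitz; lra|exact Hy].
Qed.

Lemma C1_on_continuous_within s : u <= s <= v -> forall eps, 0 < eps -> exists delta, 0 < delta /\
  forall s', u <= s' <= v -> Rabs (s' - s) < delta -> Rabs (g s' - g s) < eps.
Proof.
  intros Hs eps Heps. destruct (proj1 Hg s Hs 1 Rlt_0_1) as [d1 [Hd1 P]].
  set (K := Rabs (dg s) + 1). assert (HK : 0 < K) by (unfold K; pose proof (Rabs_pos (dg s)); lra).
  exists (Rmin d1 (eps / K)). split; [apply Rmin_pos; [lra|apply Rdiv_lt_0_compat; lra]|].
  intros s' Hs' Hd. pose proof (Rmin_l d1 (eps / K)); pose proof (Rmin_r d1 (eps / K)).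
  destruct (Req_dec s' s) as [->|Hne]; [rewrite Rminus_diag, Rabs_R0; lra|].
  specialize (P s' Hs' Hne ltac:(lra)).
  assert (Hq : Rabs ((g s' - g s) / (s' - s)) < K).
  { unfold K. pose proof (Rabs_triang_inv ((g s' - g s) / (s' - s)) (dg s)). lra. }
  replace (g s' - g s) with ((g s' - g s) / (s' - s) * (s' - s)) by (field; lra).
  rewrite Rabs_mult. pose proof (Rabs_pos (s' - s)). pose proof (Rabs_pos ((g s' - g s) / (s' - s))).
  assert (K * (eps / K) = eps) by (field; lra). nra.
Qed.

Lemma continuity_pt_clamp_C1 t : continuity_pt (fun x => g (clamp u v x)) t.
Proof. apply continuity_pt_clamp, C1_on_continuous_within. Qed.

Lemma continuity_pt_clamp_C1_deriv t : continuity_pt (fun x => dg (clamp u v x)) t.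
Proof. apply continuity_pt_clamp, (proj2 Hg). Qed.

Lemma derivable_pt_lim_clamp_C1 t : u < t < v -> derivable_pt_lim (fun x => g (clamp u v x)) t (dg t).
Proof.
  intros Ht eps Heps. destruct (proj1 Hg t ltac:(lra) eps Heps) as [d1 [Hd1 P]].
  assert (Hd : 0 < Rmin d1 (Rmin (t - u) (v - t))) by (repeat apply Rmin_pos; lra).
  exists (mkposreal _ Hd). simpl. intros k Hk Hkd.
  pose proof (Rmin_l d1 (Rmin (t - u) (v - t))); pose proof (Rmin_r d1 (Rmin (t - u) (v - t))).
  pose proof (Rmin_l (t - u) (v - t)); pose proof (Rmin_r (t - u) (v - t)).
  apply Rabs_def2 in Hkd as Hk2.
  rewrite (clamp_id u v (t + k)), (clamp_id u v t) by lra.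
  replace k with ((t + k) - t) at 2 by ring.
  apply P; [lra|lra|]. replace (t + k - t) with k by ring. lra.
Qed.

End ClampedC1.

Definition primitive_vec (f : R -> R -> Cpx) (r t : R) : Cpx :=
  (primitive f true r t, primitive f false r t).

Section CurvePiece.
Variable f : R -> R -> Cpx.
Hypothesis hf : polar_analytic f.
Variables (rc thc : R -> R) (dr dth : nat -> R -> R) (i : nat) (u v : R).
Hypothesis Huv : u < v.
Hypothesis Hpos : forall t, u <= t <= v -> 0 < rc t.
Hypothesis Hr : C1_on rc (dr i) u v.
Hypothesis Hth : C1_on thc (dth i) u v.

Let rcc (x : R) : R := rc (clamp u v x).
Let thcc (x : R) : R := thc (clamp u v x).

Lemma continuity_pt_integrand_clamp b x :
  continuity_pt (fun y => Cpart b (integrand f rc thc dr dth i (clamp u v y))) x.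
Proof.
  pose proof (continuity_pt_clamp_C1 rc (dr i) u v Huv Hr) as Crc.
  pose proof (continuity_pt_clamp_C1 thc (dth i) u v Huv Hth) as Cth.
  enough (Hc : Ccontinuity_2d_pt (fun y _ => integrand f rc thc dr dth i (clamp u v y)) x 0)
    by exact (continuity_2d_pt_slice_l _ x 0 (Hc b)).
  unfold integrand.
  apply (Ccontinuity_2d_pt_mul (fun y _ => f (rcc y) (thcc y))
    (fun y _ => Cmul (Cexpi (thcc y)) (dr i (clamp u v y), rcc y * dth i (clamp u v y)))).
  - apply Ccontinuity_2d_pt_curve; [|apply Crc|apply Cth].
    apply polar_analytic_continuous; [exact hf|apply Hpos, clamp_in; lra].
  - apply (Ccontinuity_2d_pt_mul (fun y _ => Cexpi (thcc y))
      (fun y _ => (dr i (clamp u v y), rcc y * dth i (clamp u v y)))).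
    + apply (Ccontinuity_2d_pt_curve (fun _ t => Cexpi t) rcc thcc);
        [apply Ccontinuity_2d_pt_Cexpi|apply Crc|apply Cth].
    + apply Ccontinuity_2d_pt_pair; [|apply continuity_2d_pt_mult];
        apply continuity_2d_pt_of_pt;
        [apply continuity_pt_clamp_C1_deriv with (g := rc)|apply Crc
        |apply continuity_pt_clamp_C1_deriv with (g := thc)]; assumption.
Qed.

Lemma RInt_integrand_piece b :
  RInt (fun t => Cpart b (integrand f rc thc dr dth i t)) u v
  = primitive f b (rc v) (thc v) - primitive f b (rc u) (thc u).
Proof.
  rewrite (RInt_ext _ (fun y => Cpart b (integrand f rc thc dr dth i (clamp u v y))))
    by (intros x Hx; rewrite Rmin_left, Rmax_right in Hx by lra; rewrite clamp_id by lra; reflexivity).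
  replace (primitive f b (rc v) (thc v) - primitive f b (rc u) (thc u))
    with (primitive f b (rcc v) (thcc v) - primitive f b (rcc u) (thcc u))
    by (unfold rcc, thcc; rewrite !clamp_id by lra; reflexivity).
  apply (RInt_eq_sub_of_derive (fun x => primitive f b (rcc x) (thcc x))); [exact Huv| | |].
  - intros x Hx. rewrite clamp_id by lra.
    replace (Cpart b (integrand f rc thc dr dth i x))
      with (Cpart b (form_r f (rcc x) (thcc x)) * dr i x + Cpart b (form_th f (rcc x) (thcc x)) * dth i x)
      by (unfold rcc, thcc; rewrite clamp_id by lra;
          destruct b; unfold integrand, form_r, form_th, Cmul, Cexpi; simpl; ring).
    apply derivable_pt_lim_comp_2d.
    + apply primitive_differentiable; [exact hf|apply Hpos, clamp_in; lra].
    + apply derivable_pt_lim_clamp_C1; assumption.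
    + apply derivable_pt_lim_clamp_C1; assumption.
  - intros x Hx.
    apply (continuity_2d_pt_slice_l (fun y _ => primitive f b (rcc y) (thcc y)) x 0).
    apply (continuity_2d_pt_curve (primitive f b) rcc thcc).
    + apply differentiable_continuity_pt. eexists _, _.
      apply primitive_differentiable; [exact hf|apply Hpos, clamp_in; lra].
    + apply (continuity_pt_clamp_C1 rc (dr i)); assumption.
    + apply (continuity_pt_clamp_C1 thc (dth i)); assumption.
  - apply continuity_pt_integrand_clamp.
Qed.

Lemma CRint_integrand_piece :
  CRint (integrand f rc thc dr dth i) u v
    (Csub (primitive_vec f (rc v) (thc v)) (primitive_vec f (rc u) (thc u))).
Proof.
  assert (Hex : forall b, ex_RInt (fun t => Cpart b (integrand f rc thc dr dth i t)) u v).
  { intro b. apply (ex_RInt_ext (fun y => Cpart b (integrand f rc thc dr dth i (clamp u v y)))).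
    - intros x Hx. rewrite Rmin_left, Rmax_right in Hx by lra. rewrite clamp_id by lra. reflexivity.
    - apply (ex_RInt_continuous (V := R_CompleteNormedModule)). intros x _.
      apply continuity_pt_filterlim, continuity_pt_integrand_clamp. }
  split.
  - exists (ex_RInt_Reals_0 _ _ _ (Hex true)). rewrite <- RInt_Reals. exact (RInt_integrand_piece true).
  - exists (ex_RInt_Reals_0 _ _ _ (Hex false)). rewrite <- RInt_Reals. exact (RInt_integrand_piece false).
Qed.

End CurvePiece.

Lemma Csum_telescope (w : nat -> Cpx) m :
  Csum m (fun j => Csub (w (S j)) (w j)) = Csub (w m) (w O).
Proof.
  induction m as [|m IH]; simpl.
  - unfold C0, Csub. f_equal; ring.
  - rewrite IH. unfold Cadd, Csub; simpl. f_equal; ring.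
Qed.

Lemma regular_curve_partition_bounds a b rc thc n p dr dth :
  regular_curve a b rc thc n p dr dth -> forall j, (j <= n)%nat -> a <= p j <= b.
Proof.
  intros (_ & Hp0 & Hpn & Hinc & _).
  assert (Mono : forall k j, (j + k <= n)%nat -> p j <= p (j + k)%nat).
  { induction k as [|k IH]; intros j Hjk; [rewrite Nat.add_0_r; lra|].
    rewrite Nat.add_succ_r. specialize (IH j ltac:(lia)). specialize (Hinc (j + k)%nat ltac:(lia)). lra. }
  intros j Hj. split.
  - rewrite <- Hp0. apply (Mono j O). lia.
  - rewrite <- Hpn. pose proof (Mono (n - j)%nat j ltac:(lia)) as Hm.
    replace (j + (n - j))%nat with n in Hm by lia. exact Hm.
Qed.

Lemma line_integral_primitive f a b rc thc n p dr dth : polar_analytic f ->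
  regular_curve a b rc thc n p dr dth ->
  line_integral f rc thc n p dr dth
    (Csub (primitive_vec f (rc b) (thc b)) (primitive_vec f (rc a) (thc a))).
Proof.
  intros hf Hc. pose proof (regular_curve_partition_bounds _ _ _ _ _ _ _ _ Hc) as Hbd.
  destruct Hc as (_ & Hp0 & Hpn & Hinc & Hpos & HC1).
  set (w := fun j => primitive_vec f (rc (p j)) (thc (p j))).
  exists (fun j => Csub (w (S j)) (w j)). split.
  - intros j Hj. destruct (HC1 j Hj) as [Hr Hth].
    apply CRint_integrand_piece; try assumption; [apply Hinc, Hj|].
    intros t Ht. apply Hpos. pose proof (Hbd j ltac:(lia)). pose proof (Hbd (S j) ltac:(lia)). lra.
  - rewrite Csum_telescope. unfold w. rewrite Hpn, Hp0. reflexivity.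
Qed.

Theorem proposition2 (f : R -> R -> Cpx) (hf : polar_analytic f)
  (r1 th1 r2 th2 : R) (hr1 : 0 < r1) (hr2 : 0 < r2) :
  (exists v : Cpx,
     forall (a b : R) (rc thc : R -> R) (n : nat) (p : nat -> R)
            (dr dth : nat -> R -> R),
       regular_curve a b rc thc n p dr dth ->
       rc a = r1 -> thc a = th1 -> rc b = r2 -> thc b = th2 ->
       line_integral f rc thc n p dr dth v) /\
  (forall (a b : R) (rc thc : R -> R) (n : nat) (p : nat -> R)
          (dr dth : nat -> R -> R),
     regular_curve a b rc thc n p dr dth ->
     rc a = rc b -> thc a = thc b ->
     line_integral f rc thc n p dr dth C0).
Proof.
  split.
  - exists (Csub (primitive_vec f r2 th2) (primitive_vec f r1 th1)).
    intros a b rc thc n p dr dth Hc Ha1 Ha2 Hb1 Hb2.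
    rewrite <- Ha1, <- Ha2, <- Hb1, <- Hb2. apply line_integral_primitive; assumption.
  - intros a b rc thc n p dr dth Hc Hr Hth.
    replace C0 with (Csub (primitive_vec f (rc b) (thc b)) (primitive_vec f (rc a) (thc a)))
      by (rewrite Hr, Hth; unfold Csub, C0; f_equal; ring).
    apply line_integral_primitive; assumption.
Qed.
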